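(* Let $F$ be a field and let $v$ be a place of $F(T)$ which is trivial on $F$ and whose residue field is separable over $F$. Then the maps $\mathcal D_j$ on $F(T)$ extend continuously to the completion of $F(T)$ at $v$, and there they form a higher $K$-derivation for any coefficient field $K$ of the completion such that $K$ contains $F$.
   Context: For $j\ge0$, $\mathcal D_j$ is the $j$th hyperdifferential operator: the $F$-linear map on $F[T]$ with $\mathcal D_j(T^m)=\binom{m}{j}T^{m-j}$ for $m\ge0$. The sequence $(\mathcal D_j)$ is a higher $F$-derivation on $F[T]$ and extends uniquely to a higher $F$-derivation on the field $F(T)$; these extended maps are the $\mathcal D_j$ on $F(T)$. Here, for a commutative ring $R$ and $R$-algebra $A$, a higher $R$-derivation on $A$ is a sequence of $R$-linear maps $d_j:A\to A$ with $d_0=\mathrm{id}$ and $d_j(ab)=\sum_{k=0}^jd_k(a)d_{j-k}(b)$. A coefficient field of a complete discretely valued field is a subfield of its valuation ring mapping isomorphically onto the residue field. *)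

From mathcomp Require Import all_boot all_order all_algebra all_field.
Set Implicit Arguments. Unset Strict Implicit. Unset Printing Implicit Defensive.
Import Order.TTheory GRing.Theory Num.Theory.
Local Open Scope ring_scope.

Notation ratfun F := {fraction {poly F}}.
Definition polyF (F : fieldType) (p : {poly F}) : ratfun F := @FracField.tofrac _ p.
Definition constF (F : fieldType) (c : F) : ratfun F := polyF c%:P.

(* [vge w x n] : "w(x) >= n", with the convention w(0) = +oo. *)
Definition vge (R : fieldType) (w : R -> int) (x : R) (n : int) : Prop :=
  x = 0 \/ (n <= w x)%R.

(* A (normalized, surjective) discrete valuation  w : R^* ->> Z  (value at 0 is
   irrelevant; w 0 = +oo is encoded by vge). *)
Definition discrete_valuation (R : fieldType) (w : R -> int) : Prop :=
  [/\ (forall x y, x != 0 -> y != 0 -> w (x * y) = w x + w y),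
      (forall x y, x != 0 -> y != 0 -> x + y != 0 ->
                   Order.min (w x) (w y) <= w (x + y))
    & exists pi : R, pi != 0 /\ w pi = 1].

Definition trivial_on_F (F : fieldType) (w : ratfun F -> int) : Prop :=
  forall c : F, c != 0 -> w (constF c) = 0.

(* The residue field O_w / m_w is separable (algebraic) over F: the residue of
   every a in the valuation ring is a root of a separable polynomial over F. *)
Definition separable_residue (F : fieldType) (w : ratfun F -> int) : Prop :=
  forall a : ratfun F, vge w a 0 ->
    exists q : {poly F}, separable_poly q /\
      vge w ((map_poly (@constF F) q).[a]) 1.

Definition higher_derivation (A : comRingType) (S : A -> Prop)
    (d : nat -> A -> A) : Prop :=
  [/\ (forall x, d 0%N x = x),
      (forall j x y, d j (x + y) = d j x + d j y),
      (forall j s x, S s -> d j (s * x) = s * d j x)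
    & (forall j a b, d j (a * b) = \sum_(k < j.+1) d k a * d (j - k)%N b)].

Definition hyperdiff_on_ratfun (F : fieldType)
    (D : nat -> ratfun F -> ratfun F) : Prop :=
  higher_derivation (fun x => exists c : F, x = constF c) D /\
  (forall j (p : {poly F}), D j (polyF p) = polyF (p^`N(j))).

Definition v_cauchy (R : fieldType) (w : R -> int) (u : nat -> R) : Prop :=
  forall n : int, exists N, forall m k, (N <= m)%N -> (N <= k)%N -> vge w (u m - u k) n.
Definition v_converges (R : fieldType) (w : R -> int) (u : nat -> R) (l : R) : Prop :=
  forall n : int, exists N, forall m, (N <= m)%N -> vge w (u m - l) n.
Definition v_continuous (R : fieldType) (w : R -> int) (f : R -> R) : Prop :=
  forall x (n : int), exists m : int, forall y, vge w (y - x) m -> vge w (f y - f x) n.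

Definition is_completion (L E : fieldType) (w : L -> int) (wE : E -> int)
    (iota : L -> E) : Prop :=
  [/\ discrete_valuation wE,
      (forall u, v_cauchy wE u -> exists l, v_converges wE u l),
      (forall x, x != 0 -> wE (iota x) = w x)
    & (forall (e : E) (n : int), exists x : L, vge wE (e - iota x) n)].

Definition is_subfield (E : fieldType) (K : pred E) : Prop :=
  [/\ 0 \in K, 1 \in K,
      (forall x y, x \in K -> y \in K -> x - y \in K),
      (forall x y, x \in K -> y \in K -> x * y \in K)
    & (forall x, x \in K -> x^-1 \in K)].

(* coefficient field: a subfield of the valuation ring mapping isomorphically
   (bijectively) onto the residue field. *)
Definition coefficient_field (E : fieldType) (wE : E -> int) (K : pred E) : Prop :=
  [/\ is_subfield K,
      (forall k, k \in K -> vge wE k 0),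
      (forall k1 k2, k1 \in K -> k2 \in K -> vge wE (k1 - k2) 1 -> k1 = k2)
    & (forall a, vge wE a 0 -> exists2 k, k \in K & vge wE (a - k) 1)].

From HB Require Import structures.
From mathcomp Require Import all_boot all_order all_algebra all_field.
From mathcomp Require Import zify ring.
From Stdlib Require Import ClassicalEpsilon.
Set Implicit Arguments. Unset Strict Implicit. Unset Printing Implicit Defensive.
Import Order.TTheory GRing.Theory Num.Theory.
Local Open Scope ring_scope.

(* Let O be the valuation ring of w on F(T). Every D_j maps O into O: if
   w(T) >= 0, write u in O as a/b with coprime polynomials; a Bezout relation
   forces w(b) = 0, and D_j(b^-1) is controlled by the recursion coming from
   b * b^-1 = 1. If w(T) < 0, the same works in the variable T^-1, which lies
   in the maximal ideal. Writing x = pi^n u with a uniformizer pi and u in O,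
   the Leibniz rule then gives w(D_j x) >= w(x) - j, so each D_j is uniformly
   continuous and extends to the completion, where the identities of a higher
   derivation persist by density.
   For K-linearity it suffices that the extended D_j (j > 0) vanish on K. An
   element s of K reduces to a root of a separable polynomial q over F, so
   q(s) lies in K and reduces to 0, whence q(s) = 0 and q'(s) <> 0; applying
   D_j to q(s) = 0 and inducting on j shows D_j(s) = 0. *)

Section DiscreteValuation.
Variables (R : fieldType) (w : R -> int).
Hypothesis hw : discrete_valuation w.

Lemma valuationM x y : x != 0 -> y != 0 -> w (x * y) = w x + w y.
Proof. by case: hw => h _ _; apply: h. Qed.

Lemma valuation1 : w 1 = 0.
Proof.
have h10 : (1 : R) != 0 := oner_neq0 _.
by have := valuationM h10 h10; rewrite mulr1; lia.
Qed.

Lemma valuationN x : w (- x) = w x.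
Proof.
have [->|x0] := eqVneq x 0; first by rewrite oppr0.
have N10 : (-1 : R) != 0 by rewrite oppr_eq0 oner_neq0.
have wN1 : w (-1) = 0.
  by have := valuationM N10 N10; rewrite mulrNN mulr1 valuation1; lia.
by rewrite -mulN1r valuationM // wN1 add0r.
Qed.

Lemma valuationV x : x != 0 -> w x^-1 = - w x.
Proof. by move=> x0; have := valuationM x0 (invr_neq0 x0); rewrite mulfV // valuation1; lia. Qed.

Lemma valuationX x n : x != 0 -> w (x ^+ n) = n%:Z * w x.
Proof.
move=> x0; elim: n => [|n IH]; first by rewrite expr0 valuation1 mul0r.
by rewrite exprS valuationM ?expf_neq0 // IH; lia.
Qed.

Lemma valuationD_lt x y : x != 0 -> y != 0 -> w x < w y -> x + y != 0 /\ w (x + y) = w x.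
Proof.
case: hw => _ hD _ x0 y0 lt.
have xy0 : x + y != 0.
  by apply: contraTneq lt => /eqP; rewrite addr_eq0 => /eqP ->; rewrite valuationN ltxx.
split=> //; have := hD _ _ x0 y0 xy0.
have := hD (x + y) (- y) xy0; rewrite oppr_eq0 addrK valuationN => /(_ y0 x0).
by rewrite !ge_min; move: lt; lia.
Qed.

Lemma vgeW x n m : vge w x n -> m <= n -> vge w x m.
Proof. by case=> [->|h] mn; [left | right; apply: le_trans h]. Qed.

Lemma vgeN x n : vge w x n -> vge w (- x) n.
Proof. by case=> [->|h]; [rewrite oppr0; left | right; rewrite valuationN]. Qed.

Lemma vgeD x y n : vge w x n -> vge w y n -> vge w (x + y) n.
Proof.
case: hw => _ hD _ [->|hx]; first by rewrite add0r.
case=> [->|hy]; first by rewrite addr0; right.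
have [->|x0] := eqVneq x 0; first by rewrite add0r; right.
have [->|y0] := eqVneq y 0; first by rewrite addr0; right.
have [|xy0] := eqVneq (x + y) 0; first by left.
by right; apply: le_trans (hD _ _ x0 y0 xy0); rewrite le_min hx hy.
Qed.

Lemma vgeB x y n : vge w x n -> vge w y n -> vge w (x - y) n.
Proof. by move=> hx /vgeN; apply: vgeD. Qed.

Lemma vgeM x y n m : vge w x n -> vge w y m -> vge w (x * y) (n + m).
Proof.
case=> [->|hx]; first by rewrite mul0r; left.
case=> [->|hy]; first by rewrite mulr0; left.
have [->|x0] := eqVneq x 0; first by rewrite mul0r; left.
have [->|y0] := eqVneq y 0; first by rewrite mulr0; left.
by right; rewrite valuationM // lerD.
Qed.

Lemma vge_sum (I : Type) (r : seq I) (P : pred I) (f : I -> R) n :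
  (forall i, P i -> vge w (f i) n) -> vge w (\sum_(i <- r | P i) f i) n.
Proof. by move=> h; elim/big_rec: _ => [|i x /h]; [left | apply: vgeD]. Qed.

Lemma vge_mulB a a' b b' n m : m <= n ->
  vge w a m -> vge w b m -> vge w (a - a') n -> vge w (b - b') n ->
  vge w (a * b - a' * b') (n + m).
Proof.
move=> mn ha hb ha' hb'.
have hb'm : vge w b' m.
  have -> : b' = b - (b - b') by ring.
  exact: vgeB hb (vgeW hb' mn).
have -> : a * b - a' * b' = a * (b - b') + (a - a') * b' by ring.
by apply: vgeD; [rewrite [n + m]addrC |]; apply: vgeM.
Qed.

Lemma vge_eq x y : (forall n : nat, vge w (x - y) n%:Z) -> x = y.
Proof.
move=> h; apply/eqP; rewrite -subr_eq0; apply/negPn/negP => xy0.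
by case: (h `|w (x - y)|.+1)%N => [/eqP|]; [rewrite (negPf xy0) | lia].
Qed.

Lemma vge_lower_bound (f : nat -> R) j :
  exists2 M : int, M <= 0 & forall k, (k <= j)%N -> vge w (f k) M.
Proof.
elim: j => [|j [M M0 hM]].
  exists (Order.min 0 (w (f 0%N))); first by rewrite ge_min lexx.
  move=> k; rewrite leqn0 => /eqP ->.
  by have [->|_] := eqVneq (f 0%N) 0; [left | right; rewrite ge_min lexx orbT].
exists (Order.min M (w (f j.+1))); first by rewrite ge_min M0.
move=> k; rewrite leq_eqVlt => /orP [/eqP ->|/hM hk].
  by have [->|_] := eqVneq (f j.+1) 0; [left | right; rewrite ge_min lexx orbT].
by apply: vgeW hk _; rewrite ge_min lexx.
Qed.

Lemma vge_horner (p : {poly R}) x :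
  (forall i, vge w p`_i 0) -> vge w x 0 -> vge w p.[x] 0.
Proof.
move=> + hx; elim/poly_ind: p => [|p c IH] hp; first by rewrite horner0; left.
have hc := hp 0%N; rewrite coefD coefMX coefC /= add0r in hc.
have hp' i : vge w p`_i 0 by have := hp i.+1; rewrite coefD coefMX coefC /= addr0.
by rewrite hornerMXaddC; apply: vgeD hc; rewrite -(addr0 0); apply: vgeM; first exact: IH.
Qed.

Lemma vge_hornerB (p : {poly R}) y z : (forall i, vge w p`_i 0) ->
  vge w y 0 -> vge w z 0 -> vge w (y - z) 1 -> vge w (p.[y] - p.[z]) 1.
Proof.
move=> + hy hz hyz; elim/poly_ind: p => [|p c IH] hp; first by rewrite !horner0 subrr; left.
have hp' i : vge w p`_i 0 by have := hp i.+1; rewrite coefD coefMX coefC /= addr0.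
have -> : (p * 'X + c%:P).[y] - (p * 'X + c%:P).[z] = (p.[y] - p.[z]) * y + p.[z] * (y - z).
  by rewrite !hornerMXaddC; ring.
apply: vgeD; first by rewrite -(addr0 1); apply: vgeM; first exact: IH.
by rewrite -(add0r 1); apply: vgeM => //; apply: vge_horner.
Qed.

End DiscreteValuation.

Section HigherDerivation.
Variables (A : fieldType) (S : A -> Prop) (d : nat -> A -> A).
Hypothesis hd : higher_derivation S d.

Lemma hder_id x : d 0 x = x.
Proof. by case: hd. Qed.

Lemma hderD j x y : d j (x + y) = d j x + d j y.
Proof. by case: hd => _ h _ _; apply: h. Qed.

Lemma hderM j x y : d j (x * y) = \sum_(k < j.+1) d k x * d (j - k) y.
Proof. by case: hd => _ _ _ h; apply: h. Qed.

Lemma hder0 j : d j 0 = 0.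
Proof. by apply: (@addrI _ (d j 0)); rewrite -hderD !addr0. Qed.

Lemma hderN j x : d j (- x) = - d j x.
Proof. by apply/eqP; rewrite -subr_eq0 opprK -hderD addNr hder0. Qed.

Lemma hderB j x y : d j (x - y) = d j x - d j y.
Proof. by rewrite hderD hderN. Qed.

Lemma hder1 j : d j 1 = (j == 0)%:R.
Proof.
elim/ltn_ind: j => -[|j] IH; first by rewrite hder_id.
have := hderM j.+1 1 1.
rewrite mulr1 big_ord_recl big_ord_recr /= hder_id subn0 subnn hder_id mul1r mulr1.
rewrite big1 ?add0r => [|i _]; first by rewrite -{1}[d j.+1 1]addr0 => /addrI <-.
by rewrite IH ?mul0r // /bump add1n ltnS ltn_ord.
Qed.

Lemma hder_scalar j s : S s -> d j s = (j == 0)%:R * s.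
Proof. by case: hd => _ _ h _ /h hs; rewrite -[s]mulr1 hs hder1 mulr1 mulrC. Qed.

Lemma hderV j x : x != 0 ->
  d j.+1 x^-1 = - (x^-1 * \sum_(i < j.+1) d i.+1 x * d (j - i) x^-1).
Proof.
move=> x0; have := hderM j.+1 x x^-1.
rewrite mulfV // hder1 big_ord_recl hder_id subn0 mulr0n => /esym /eqP.
rewrite addr_eq0 => /eqP /(congr1 ( *%R x^-1)) /=.
by rewrite mulrA mulVf // mul1r => ->; rewrite mulrN.
Qed.

Lemma hder_simple_root (F : fieldType) (f : {rmorphism F -> A}) (q : {poly F}) s :
  (forall c, S (f c)) -> root (map_poly f q) s -> ~~ root (map_poly f q)^`() s ->
  forall j, (0 < j)%N -> d j s = 0.
Proof.
move=> hf qs0 q's0 j; elim/ltn_ind: j => -[//|j] IH _.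
have chain p : d j.+1 (map_poly f p).[s] = (map_poly f p)^`().[s] * d j.+1 s.
  elim/poly_ind: p => [|p c IHp].
    by rewrite rmorph0 horner0 deriv0 horner0 mul0r hder0.
  rewrite rmorphD rmorphM /= map_polyX map_polyC /= hornerMXaddC derivMXaddC.
  rewrite hornerD hornerM hornerX hderD (hder_scalar _ (hf c)) mul0r addr0.
  rewrite hderM big_ord_recl big_ord_recr /= hder_id subn0 subnn hder_id IHp.
  rewrite big1 ?add0r => [|i _]; first by ring.
  by rewrite IH ?mulr0 // /bump add1n subSS; have := ltn_ord i; lia.
apply/eqP; have := chain q; move/rootP: qs0 => ->.
by rewrite hder0 => /esym /eqP; rewrite mulf_eq0 -/(root _ s) (negPf q's0).
Qed.

Lemma higher_derivation_subscalars (K : A -> Prop) :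
  (forall s, K s -> forall j, (0 < j)%N -> d j s = 0) -> higher_derivation K d.
Proof.
case: hd => h0 hD _ hM hK; split=> // j s x /hK ks.
rewrite hM big_ord_recl h0 subn0 big1 ?addr0 // => i _.
by rewrite ks ?mul0r.
Qed.

End HigherDerivation.

Definition hder_integral (R : fieldType) (w : R -> int) (d : nat -> R -> R) (u : R) :=
  forall j, vge w (d j u) 0.

Section IntegralElements.
Variables (R : fieldType) (w : R -> int) (S : R -> Prop) (d : nat -> R -> R).
Hypotheses (hw : discrete_valuation w) (hd : higher_derivation S d).
Local Notation integral := (hder_integral w d).

Lemma hder_integralD x y : integral x -> integral y -> integral (x + y).
Proof. by move=> hx hy j; rewrite (hderD hd); apply: (vgeD hw). Qed.

Lemma hder_integralM x y : integral x -> integral y -> integral (x * y).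
Proof.
move=> hx hy j; rewrite (hderM hd); apply: (vge_sum hw) => // k _.
by rewrite -(addr0 0); apply: (vgeM hw).
Qed.

Lemma hder_integral1 : integral 1.
Proof. by move=> [|j]; rewrite (hder1 hd) /=; [right; rewrite valuation1 | left]. Qed.

Lemma hder_integralX x n : integral x -> integral (x ^+ n).
Proof.
move=> hx; elim: n => [|n IH]; first by rewrite expr0; apply: hder_integral1.
by rewrite exprS; apply: hder_integralM.
Qed.

Lemma hder_integral_scalar s : S s -> vge w s 0 -> integral s.
Proof. by move=> Ss hs [|j]; rewrite (hder_scalar hd) // ?mul1r // mulr0n mul0r; left. Qed.

Lemma hder_integralV x : x != 0 -> vge w x^-1 0 ->
  (forall k, (0 < k)%N -> vge w (x^-1 * d k x) 0) -> integral x^-1.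
Proof.
move=> x0 hx hk j; elim/ltn_ind: j => -[|j] IH; first by rewrite (hder_id hd).
rewrite (hderV hd) //; apply: (vgeN hw); rewrite mulr_sumr; apply: (vge_sum hw) => i _.
by rewrite mulrA -(addr0 0); apply: (vgeM hw); [apply: hk | apply: IH; rewrite ltnS leq_subr].
Qed.

Lemma hder_integral_div a b : integral a -> integral b -> b != 0 -> w b = 0 ->
  integral (a / b).
Proof.
move=> ha hb b0 wb0; have wVb : vge w b^-1 0 by right; rewrite valuationV // wb0.
apply: hder_integralM => //; apply: hder_integralV => // k _.
by rewrite -(addr0 0); apply: (vgeM hw).
Qed.

Hypothesis hint : forall u, vge w u 0 -> integral u.

Lemma vge_hder_expr pi n k : w pi = 1 -> vge w (d k (pi ^+ n)) (n%:Z - k%:Z).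
Proof.
move=> wpi1; have hpi : vge w pi 1 by right; rewrite wpi1.
elim: n k => [|n IH] k.
  by rewrite expr0 (hder1 hd); case: k => [|k] /=; [right; rewrite valuation1 | left].
rewrite exprS (hderM hd); apply: (vge_sum hw) => i _.
have [->|i0] := posnP i.
  by rewrite (hder_id hd) subn0; apply: vgeW (vgeM hw hpi (IH k)) _; lia.
apply: vgeW (vgeM hw (hint (vgeW hpi _) i) (IH (k - i)%N)) _ => //.
by have := ltn_ord i; lia.
Qed.

Lemma vge_hder j x (n : nat) : vge w x n%:Z -> vge w (d j x) (n%:Z - j%:Z).
Proof.
have [pi [pi0 wpi1]] : exists pi, pi != 0 /\ w pi = 1 by case: hw.
have [->|x0] := eqVneq x 0; first by rewrite (hder0 hd); left.
case=> [/eqP|hx]; first by rewrite (negPf x0).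
have pn0 : pi ^+ n != 0 := expf_neq0 n pi0.
have hu : vge w (x / pi ^+ n) 0.
  by right; rewrite valuationM ?invr_eq0 // valuationV // valuationX // wpi1; lia.
rewrite -(divfK pn0 x) mulrC (hderM hd); apply: (vge_sum hw) => i _.
apply: vgeW (vgeM hw (vge_hder_expr n i wpi1) (hint hu (j - i)%N)) _.
by have := ltn_ord i; lia.
Qed.

End IntegralElements.

Lemma exists_tofrac_div (R : idomainType) (x : {fraction R}) :
  exists p q, q != 0 /\ x = (@FracField.tofrac R p) / (@FracField.tofrac R q).
Proof.
elim/quotP: x => r _; have q0 := denom_ratioP r.
exists (frac r).1, (frac r).2; split => //.
apply: (@mulIf _ (FracField.tofrac (frac r).2)); first by rewrite tofrac_eq0.
rewrite mulfVK ?tofrac_eq0 //; unlock FracField.tofrac.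
apply: etrans; first exact: (esym (FracField.pi_mul _ _)).
apply/eqmodP => /=.
rewrite FracField.equivfE /FracField.mulf /=.
by rewrite !numden_Ratio ?oner_neq0 ?mulf_neq0 ?oner_neq0 // !mulr1 mulrC.
Qed.

Section RationalFunctions.
Variable F : fieldType.

HB.instance Definition _ := GRing.RMorphism.copy (@polyF F) (@FracField.tofrac _).
HB.instance Definition _ := GRing.RMorphism.copy (@constF F) (@polyF F \o polyC).

Lemma polyF_eq0 (p : {poly F}) : (polyF p == 0) = (p == 0).
Proof. exact: tofrac_eq0. Qed.

Lemma constF_eq0 (c : F) : (constF c == 0) = (c == 0).
Proof. by rewrite /constF polyF_eq0 polyC_eq0. Qed.

Lemma exists_coprime_polyF_div (u : ratfun F) :
  exists a b, [/\ coprimep a b, b != 0 & u = polyF a / polyF b].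
Proof.
have [p [q [q0 ->]]] := exists_tofrac_div u.
have [a [b [g [g0 ep eq cop]]]] : exists a b g,
    [/\ g != 0, p = a * g, q = b * g & coprimep a b].
  exists (p %/ gcdp p q), (q %/ gcdp p q), (gcdp p q).
  rewrite !divpK ?dvdp_gcdl ?dvdp_gcdr ?gcdp_eq0 ?negb_and ?q0 ?orbT //.
  by split=> //; apply: coprimep_div_gcd; rewrite q0 orbT.
exists a, b; split=> //; first by apply: contraNneq q0; rewrite eq => ->; rewrite mul0r.
have pg0 : polyF g != 0 by rewrite polyF_eq0.
by rewrite ep eq !rmorphM invfM mulrACA (divff pg0) mulr1.
Qed.

Variables (w : ratfun F -> int) (D : nat -> ratfun F -> ratfun F).
Hypotheses (hw : discrete_valuation w) (htriv : trivial_on_F w)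
  (hD : hyperdiff_on_ratfun D).

Local Notation T := (polyF 'X : ratfun F).
Local Notation integral := (hder_integral w D).

Lemma T_neq0 : T != 0.
Proof. by rewrite polyF_eq0 polyX_eq0. Qed.

Lemma vge_constF c : vge w (constF c) 0.
Proof. by have [->|c0] := eqVneq c 0; [rewrite rmorph0; left | right; rewrite htriv]. Qed.

Lemma hder_integral_constF c : integral (constF c).
Proof. by apply: (hder_integral_scalar hD.1); [exists c | apply: vge_constF]. Qed.

Lemma hyperdiff_T k : (0 < k)%N -> D k T = constF 'C(1, k)%:R.
Proof.
move=> k0; rewrite hD.2 -['X]expr1 nderivnXn (_ : (1 - k)%N = 0%N); last by lia.
by rewrite expr0 /constF polyC_natr.
Qed.

Section FinitePlace.
Hypothesis hT : vge w T 0.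

Lemma hder_integral_polyF p : integral (polyF p).
Proof.
have iT : integral T.
  by case=> [|k]; [rewrite (hder_id hD.1) | rewrite hyperdiff_T // ; apply: vge_constF].
elim/poly_ind: p => [|p c IH]; first by rewrite rmorph0 => j; rewrite (hder0 hD.1); left.
rewrite rmorphD rmorphM /=; apply: (hder_integralD hw hD.1); last first.
  exact: hder_integral_constF.
exact: (hder_integralM hw hD.1).
Qed.

Lemma vge_polyF p : vge w (polyF p) 0.
Proof. by have := hder_integral_polyF p 0%N; rewrite (hder_id hD.1). Qed.

Lemma coprime_denominator_unit a b : coprimep a b -> b != 0 ->
  vge w (polyF a / polyF b) 0 -> w (polyF b) = 0.
Proof.
move=> /Bezout_coprimepP [[r1 r2]] /= hr b0 hu.
have [c c0 ec] : exists2 c, c != 0 & r1 * a + r2 * b = c%:P.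
  by apply/size_poly1P; rewrite (eqp_size hr) size_poly1.
have not_both_in_max : ~ (vge w (polyF a) 1 /\ vge w (polyF b) 1).
  case=> ha hb; have : vge w (polyF (r1 * a + r2 * b)) (0 + 1).
    by rewrite rmorphD !rmorphM; apply: (vgeD hw); apply: (vgeM hw) => //; apply: vge_polyF.
  rewrite ec add0r; case=> [/eqP|]; first by rewrite polyF_eq0 polyC_eq0 (negPf c0).
  by rewrite -[polyF _]/(constF c) htriv.
have pb0 : polyF b != 0 by rewrite polyF_eq0.
case: (vge_polyF b) => [/eqP|wb0]; first by rewrite (negPf pb0).
case: (leP (w (polyF b)) 0) => [wb|wb]; first by apply/eqP; rewrite eq_le wb wb0.
exfalso; have pa0 : polyF a != 0.
  by apply/eqP => pa0; case: not_both_in_max; split; [rewrite pa0; left | right].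
case: (vge_polyF a) => [/eqP|wa0]; first by rewrite (negPf pa0).
case: (leP 1 (w (polyF a))) => [wa|wa]; first by case: not_both_in_max; split; right.
have pbV0 := invr_neq0 pb0.
case: hu => [/eqP|]; first by rewrite (negPf (mulf_neq0 pa0 pbV0)).
by rewrite (valuationM hw pa0 pbV0) (valuationV hw pb0); move: wa0 wa wb; lia.
Qed.

Lemma hder_integral_finite_place u : vge w u 0 -> integral u.
Proof.
have [a [b [cop b0 ->]]] := exists_coprime_polyF_div u => hu.
have pb0 : polyF b != 0 by rewrite polyF_eq0.
apply: (hder_integral_div hw hD.1 _ _ pb0); try exact: hder_integral_polyF.
exact: coprime_denominator_unit hu.
Qed.

End FinitePlace.

Section InfinitePlace.
Hypothesis hT : w T < 0.

Lemma valuation_polyF p : p != 0 -> w (polyF p) = (size p).-1%:Z * w T.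
Proof.
elim/poly_ind: p => [|p c IH]; first by rewrite eqxx.
have [->|p0] := eqVneq p 0.
  rewrite mul0r add0r polyC_eq0 size_polyC => c0.
  by rewrite c0 mul0r; apply: htriv.
move=> _; rewrite size_MXaddC (negPf p0) /=.
have pp0 : polyF p != 0 by rewrite polyF_eq0.
have pT0 := mulf_neq0 pp0 T_neq0.
have sp : (0 < size p)%N by rewrite size_poly_gt0.
have wpT : w (polyF p * T) = (size p)%:Z * w T.
  by rewrite (valuationM hw pp0 T_neq0) IH // -[in RHS](prednK sp) intS mulrDl mul1r addrC.
rewrite rmorphD rmorphM /=; have [->|c0] := eqVneq c 0; first by rewrite rmorph0 addr0.
have c0' : constF c != 0 by rewrite constF_eq0.
have lt : w (polyF p * T) < w (constF c) by rewrite wpT htriv //; move: hT sp; nia.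
by have [_ ->] := valuationD_lt hw pT0 c0' lt.
Qed.

Lemma hder_integral_invT : integral T^-1.
Proof.
have wTV : vge w T^-1 1 by right; rewrite (valuationV hw T_neq0); move: hT; lia.
apply: (hder_integralV hw hD.1 T_neq0 (vgeW wTV _)) => // k k0.
by rewrite hyperdiff_T //; apply: vgeW (vgeM hw wTV (vge_constF _)) _.
Qed.

Lemma hder_integral_polyF_invT (p : {poly F}) d :
  (size p <= d.+1)%N -> integral (polyF p * T^-1 ^+ d).
Proof.
have iTVX n : integral (T^-1 ^+ n) := hder_integralX hw hD.1 n hder_integral_invT.
elim/poly_ind: p d => [|p c IH] d hs.
  by rewrite rmorph0 mul0r => j; rewrite (hder0 hD.1); left.
rewrite rmorphD rmorphM /= mulrDl.
apply: (hder_integralD hw hD.1); last exact: (hder_integralM hw hD.1 (hder_integral_constF c)).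
have [->|p0] := eqVneq p 0; first by rewrite rmorph0 !mul0r => j; rewrite (hder0 hD.1); left.
move: hs; rewrite size_MXaddC (negPf p0); case: d => [|d] hs.
  by move: hs; rewrite ltnS leqn0 size_poly_eq0 (negPf p0).
by rewrite exprS mulrA -(mulrA (polyF p)) (mulfV T_neq0) mulr1; apply: IH.
Qed.

Lemma hder_integral_infinite_place u : vge w u 0 -> integral u.
Proof.
have [->|u0] := eqVneq u 0; first by move=> _ j; rewrite (hder0 hD.1); left.
have [p [q [_ q0 eu]]] := exists_coprime_polyF_div u.
have p0 : p != 0 by apply: contraNneq u0; rewrite eu => ->; rewrite rmorph0 mul0r.
have pp0 : polyF p != 0 by rewrite polyF_eq0.
have pq0 : polyF q != 0 by rewrite polyF_eq0.
have sp : (0 < size p)%N by rewrite size_poly_gt0.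
have sq : (0 < size q)%N by rewrite size_poly_gt0.
case=> [/eqP|]; first by rewrite (negPf u0).
rewrite eu (valuationM hw pp0 (invr_neq0 pq0)) (valuationV hw pq0).
rewrite (valuation_polyF p0) (valuation_polyF q0) => hu.
have spq : (size p <= size q)%N.
  move: hu (prednK sp) (prednK sq); move: (size p).-1 (size q).-1 => m n hu <- <-.
  by move: hT; nia.
set d := (size q).-1.
have TVd0 : T^-1 ^+ d != 0 := expf_neq0 _ (invr_neq0 T_neq0).
have qT0 := mulf_neq0 pq0 TVd0.
(* With d = deg q, u = (p T^-d) / (q T^-d) is a quotient of polynomials in T^-1
   whose denominator is a unit of the valuation ring. *)
rewrite -[_ / _](mulr1 _) -(divff TVd0) mulrACA -invfM.
apply: (hder_integral_div hw hD.1 _ _ qT0).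
- by apply: hder_integral_polyF_invT; rewrite /d (prednK sq).
- by apply: hder_integral_polyF_invT; rewrite /d (prednK sq).
rewrite (valuationM hw pq0 TVd0) (valuationX hw _ (invr_neq0 T_neq0)).
by rewrite (valuationV hw T_neq0) (valuation_polyF q0) -/d; lia.
Qed.

End InfinitePlace.

Lemma hder_integral_hyperdiff u : vge w u 0 -> integral u.
Proof.
case: (leP 0 (w T)) => hT; last exact: hder_integral_infinite_place.
by apply: hder_integral_finite_place; right.
Qed.

End RationalFunctions.

Section Completion.
Variables (L E : fieldType) (w : L -> int) (wE : E -> int) (iota : {rmorphism L -> E}).
Variables (S : L -> Prop) (d : nat -> L -> L).

Definition approx (e : E) (n : nat) : L :=
  epsilon (inhabits 0) (fun x => vge wE (e - iota x) n%:Z).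

Definition dhat j (e : E) : E :=
  epsilon (inhabits 0) (v_converges wE (fun k => iota (d j (approx e k)))).

Hypothesis hE : is_completion w wE iota.

Lemma completion_valuation : discrete_valuation wE.
Proof. by case: hE. Qed.
Local Notation hwE := completion_valuation.

Lemma vge_iota x n : vge wE (iota x) n <-> vge w x n.
Proof.
case: hE => _ _ hiso _; have [->|x0] := eqVneq x 0; first by rewrite rmorph0; split; left.
have ix0 : iota x != 0 by rewrite fmorph_eq0.
split; case=> [/eqP|h]; rewrite ?(negPf ix0) ?(negPf x0) //; right.
- by rewrite -hiso.
- by rewrite hiso.
Qed.

Lemma vge_iota_sub e x y n :
  vge wE (e - iota x) n -> vge wE (e - iota y) n -> vge w (x - y) n.
Proof.
move=> hx hy; apply/vge_iota; rewrite rmorphB.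
have -> : iota x - iota y = (e - iota y) - (e - iota x) by ring.
exact: (vgeB hwE).
Qed.

Lemma approxP e n : vge wE (e - iota (approx e n)) n%:Z.
Proof. by case: hE => _ _ _ hdense; exact: epsilon_spec (hdense e n%:Z). Qed.

Hypotheses (hd : higher_derivation S d)
  (hlip : forall j x (n : nat), vge w x n%:Z -> vge w (d j x) (n%:Z - j%:Z)).

Lemma dhatP j e : v_converges wE (fun k => iota (d j (approx e k))) (dhat j e).
Proof.
rewrite /dhat; apply: epsilon_spec; case: hE => _ hcomplete _ _; apply: hcomplete => n.
exists (`|n| + j)%N => m k hm hk; rewrite -rmorphB -(hderB hd) vge_iota.
have hmk : vge w (approx e m - approx e k) (`|n| + j)%N.
  by apply: (vge_iota_sub (e := e)); apply: vgeW (approxP _ _) _; rewrite lez_nat.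
by apply: vgeW (hlip j hmk) _; lia.
Qed.

Lemma vge_dhat_sub j e x (n : nat) : vge wE (e - iota x) n%:Z ->
  vge wE (dhat j e - iota (d j x)) (n%:Z - j%:Z).
Proof.
move=> hx; have [N hN] := dhatP j e (n%:Z - j%:Z); set m := maxn N n.
have hmx : vge w (approx e m - x) n%:Z.
  by apply: vge_iota_sub (vgeW (approxP e m) _) hx; rewrite lez_nat leq_maxr.
have := hlip j hmx; rewrite (hderB hd) -vge_iota rmorphB => hdm.
have -> : dhat j e - iota (d j x) =
    (iota (d j (approx e m)) - iota (d j x)) - (iota (d j (approx e m)) - dhat j e) by ring.
exact: (vgeB hwE hdm (hN m (leq_maxl N n))).
Qed.

Lemma dhat_iota j x : dhat j (iota x) = iota (d j x).
Proof.
apply: vge_eq => n; have hx : vge wE (iota x - iota x) (n + j)%N by rewrite subrr; left.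
by apply: vgeW (vge_dhat_sub j hx) _; lia.
Qed.

Lemma dhat_continuous j : v_continuous wE (dhat j).
Proof.
move=> e n; exists (`|n| + j)%N => y hy; have hx := approxP e (`|n| + j).
have hyx : vge wE (y - iota (approx e (`|n| + j))) (`|n| + j)%N.
  by rewrite -[y](subrK e) -addrA; apply: (vgeD hwE).
have -> : dhat j y - dhat j e = (dhat j y - iota (d j (approx e (`|n| + j)))) -
    (dhat j e - iota (d j (approx e (`|n| + j)))) by ring.
by apply: vgeW (vgeB hwE (vge_dhat_sub j hyx) (vge_dhat_sub j hx)) _; lia.
Qed.

Lemma dhat_id e : dhat 0 e = e.
Proof.
apply: vge_eq => n; have hx := approxP e n.
have := vge_dhat_sub 0 hx; rewrite (hder_id hd) subr0 => h0.
have -> : dhat 0 e - e = (dhat 0 e - iota (approx e n)) - (e - iota (approx e n)) by ring.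
exact: (vgeB hwE).
Qed.

Lemma dhatD j a b : dhat j (a + b) = dhat j a + dhat j b.
Proof.
apply: vge_eq => n; set N := (n + j)%N; set xa := approx a N; set xb := approx b N.
have ha : vge wE (a - iota xa) N := approxP a N.
have hb : vge wE (b - iota xb) N := approxP b N.
have hab : vge wE (a + b - iota (xa + xb)) N.
  by rewrite rmorphD opprD addrACA; apply: (vgeD hwE).
have -> : dhat j (a + b) - (dhat j a + dhat j b) =
    (dhat j (a + b) - iota (d j (xa + xb))) - (dhat j a - iota (d j xa)) -
    (dhat j b - iota (d j xb)) by rewrite (hderD hd) rmorphD; ring.
have := vgeB hwE (vgeB hwE (vge_dhat_sub j hab) (vge_dhat_sub j ha)) (vge_dhat_sub j hb).
by move/vgeW; apply; rewrite /N; lia.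
Qed.

Lemma dhatM j a b : dhat j (a * b) = \sum_(k < j.+1) dhat k a * dhat (j - k) b.
Proof.
have [Ma Ma0 hMa] := vge_lower_bound wE (dhat^~ a) j.
have [Mb Mb0 hMb] := vge_lower_bound wE (dhat^~ b) j.
have [A eM] : exists A : nat, Order.min Ma Mb = - A%:Z.
  have : Order.min Ma Mb <= 0 by rewrite ge_min Ma0.
  by exists `|Order.min Ma Mb|%N; lia.
have hA k : (k <= j)%N -> vge wE (dhat k a) (- A%:Z).
  by move=> /hMa /vgeW; apply; rewrite -eM ge_min lexx.
have hB k : (k <= j)%N -> vge wE (dhat k b) (- A%:Z).
  by move=> /hMb /vgeW; apply; rewrite -eM ge_min lexx orbT.
(* -A bounds all the factors below, so every product of approximations costs A. *)
apply: vge_eq => n; set N := (n + j + A)%N.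
set xa := approx a N; set xb := approx b N.
have ha : vge wE (a - iota xa) N := approxP a N.
have hb : vge wE (b - iota xb) N := approxP b N.
have hab : vge wE (a * b - iota (xa * xb)) (n + j)%N.
  have va : vge wE a (- A%:Z) by rewrite -(dhat_id a); apply: hA.
  have vb : vge wE b (- A%:Z) by rewrite -(dhat_id b); apply: hB.
  rewrite rmorphM; apply: vgeW (vge_mulB hwE _ va vb ha hb) _; rewrite /N; lia.
have -> : dhat j (a * b) - \sum_(k < j.+1) dhat k a * dhat (j - k) b =
    (dhat j (a * b) - iota (d j (xa * xb))) -
    \sum_(k < j.+1) (dhat k a * dhat (j - k) b - iota (d k xa * d (j - k) xb)).
  by rewrite sumrB (hderM hd) rmorph_sum; ring.
apply: (vgeB hwE); first by apply: vgeW (vge_dhat_sub j hab) _; lia.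
apply: (vge_sum hwE) => k _; have kj : (k <= j)%N by rewrite -ltnS.
have ha' : vge wE (dhat k a - iota (d k xa)) (N%:Z - j%:Z).
  by apply: vgeW (vge_dhat_sub k ha) _; lia.
have hb' : vge wE (dhat (j - k) b - iota (d (j - k) xb)) (N%:Z - j%:Z).
  by apply: vgeW (vge_dhat_sub (j - k) hb) _; lia.
have AN : - A%:Z <= N%:Z - j%:Z by rewrite /N; lia.
rewrite rmorphM; apply: vgeW (vge_mulB hwE AN (hA k kj) (hB _ (leq_subr _ _)) ha' hb') _.
by rewrite /N; lia.
Qed.

Lemma higher_derivation_dhat : higher_derivation (fun e => exists2 s, S s & e = iota s) dhat.
Proof.
split; [exact: dhat_id | exact: dhatD | | exact: dhatM].
move=> j _ e [s Ss ->]; rewrite dhatM big_ord_recl dhat_id subn0 big1 ?addr0 // => i _.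
by rewrite dhat_iota (hder_scalar hd _ Ss) mulr0n mul0r rmorph0 mul0r.
Qed.

End Completion.

Section CoefficientField.
Variables (F : fieldType) (w : ratfun F -> int) (E : fieldType) (wE : E -> int).
Variable iota : {rmorphism ratfun F -> E}.
Hypotheses (htriv : trivial_on_F w) (hsep : separable_residue w).
Hypothesis hE : is_completion w wE iota.
Variable K : pred E.
Hypotheses (hK : coefficient_field wE K) (hKF : forall c : F, iota (constF c) \in K).

Local Notation f := (iota \o @constF F).

Lemma coefficient_field_horner (q : {poly F}) s : s \in K -> (map_poly f q).[s] \in K.
Proof.
case: hK => -[K0 _ KB KM _] _ _ _ Ks.
have KD x y : x \in K -> y \in K -> x + y \in K.
  by move=> Kx Ky; rewrite -[y]opprK -[- y]sub0r; apply: KB Kx (KB _ _ K0 Ky).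
elim/poly_ind: q => [|q c IH]; first by rewrite rmorph0 horner0.
rewrite rmorphD rmorphM /= map_polyX map_polyC hornerMXaddC.
exact: KD (KM _ _ IH Ks) (hKF c).
Qed.

Lemma coefficient_field_simple_root s : s \in K ->
  exists q : {poly F}, root (map_poly f q) s /\ ~~ root (map_poly f q)^`() s.
Proof.
move=> Ks; have hwE := completion_valuation hE.
case: hK => -[K0 _ _ _ _] Kint Kinj _; have vs := Kint s Ks.
have hx := approxP hE s 1; set x := approx wE iota s 1 in hx.
have vix : vge wE (iota x) 0.
  by rewrite -[iota x](subKr s); apply: (vgeB hwE) vs (vgeW hx _).
have [q [sepq hq]] := hsep (proj1 (vge_iota hE x 0) vix).
have fq_int i : vge wE (map_poly f q)`_i 0.
  by rewrite coef_map /=; apply/(vge_iota hE)/vge_constF.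
have hqx : vge wE (map_poly f q).[iota x] 1.
  by move/(vge_iota hE): hq; rewrite -horner_map -map_poly_comp.
have qs1 : vge wE (map_poly f q).[s] 1.
  rewrite -(subrK (map_poly f q).[iota x] (map_poly f q).[s]).
  by apply: (vgeD hwE) hqx; apply: (vge_hornerB hwE).
(* q(s) is in K and reduces to 0, and K maps injectively to the residue field. *)
have qs0 : root (map_poly f q) s.
  by apply/eqP/(Kinj _ _ (coefficient_field_horner q Ks) K0); rewrite subr0.
exists q; split=> //; apply: coprimep_root qs0.
by rewrite deriv_map coprimep_map; move: sepq; rewrite unlock.
Qed.

End CoefficientField.

Theorem theorem4p3 (F : fieldType) (w : ratfun F -> int)
    (D : nat -> ratfun F -> ratfun F)
    (E : fieldType) (wE : E -> int) (iota : {rmorphism ratfun F -> E}) :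
  discrete_valuation w -> trivial_on_F w -> separable_residue w ->
  hyperdiff_on_ratfun D ->
  is_completion w wE iota ->
  exists Dh : nat -> E -> E,
    [/\ (forall j, v_continuous wE (Dh j)),
        (forall j x, Dh j (iota x) = iota (D j x))
      & (forall K : pred E, coefficient_field wE K ->
           (forall c : F, iota (constF c) \in K) ->
           higher_derivation (fun k => k \in K) Dh)].
Proof.
move=> hw htriv hsep hD hE.
have hlip := vge_hder hw hD.1 (hder_integral_hyperdiff hw htriv hD).
have hDh := higher_derivation_dhat hE hD.1 hlip.
exists (dhat wE iota D); split.
- exact: dhat_continuous hE hD.1 hlip.
- exact: dhat_iota hE hD.1 hlip.
move=> K hK hKF; apply: (higher_derivation_subscalars (K := fun k => k \in K) hDh) => s.
move=> /(coefficient_field_simple_root htriv hsep hE hK hKF) [q [qs0 q's0]].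
apply: (hder_simple_root hDh (f := iota \o @constF F) _ qs0 q's0) => c.
by exists (constF c) => //; exists c.
Qed.
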